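(* Let $\preceq$ be a partial order on a nonempty set $S_0$, let $n \ge 1$, and let $S = S_0^n$ carry the component-wise partial order ($a \preceq b$ iff $a_i \preceq b_i$ for all $i$). Let $\mathcal{G}$ be a subgroup of the symmetric group $\mathcal{S}_n$, acting on $S$ by permuting coordinates, $\sigma a = (a_{\sigma(i)})_{i}$. Then on the set $S/\mathcal{G}$ of orbits, the strong relation ($A \preceq B$ iff for all $a \in A$ there is $b \in B$ with $a \preceq b$) and the weak relation ($A \preceq B$ iff there exist $a \in A$, $b \in B$ with $a \preceq b$) are identical, and this relation is a partial order on $S/\mathcal{G}$. *)

From mathcomp Require Import all_boot all_fingroup.
Set Implicit Arguments. Unset Strict Implicit. Unset Printing Implicit Defensive.

Definition partial_order (T : Type) (le : T -> T -> Prop) : Prop :=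
  (forall x, le x x) /\
  (forall x y z, le x y -> le y z -> le x z) /\
  (forall x y, le x y -> le y x -> x = y).

Definition cw_le (T : Type) (le : T -> T -> Prop) (n : nat)
  (a b : 'I_n -> T) : Prop := forall i, le (a i) (b i).

Definition pact (n : nat) (T : Type) (s : 'S_n) (a : 'I_n -> T) : 'I_n -> T :=
  fun i => a (s i).

Definition orbitG (n : nat) (T : Type) (G : {set 'S_n}) (a : 'I_n -> T)
  : ('I_n -> T) -> Prop :=
  fun b => exists2 s, s \in G & b = pact s a.

Definition is_orbit (n : nat) (T : Type) (G : {set 'S_n})
  (A : ('I_n -> T) -> Prop) : Prop :=
  exists a, A = orbitG G a.

Definition strong_rel (U : Type) (le : U -> U -> Prop) (A B : U -> Prop) : Prop :=
  forall a, A a -> exists2 b, B b & le a b.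

Definition weak_rel (U : Type) (le : U -> U -> Prop) (A B : U -> Prop) : Prop :=
  exists a b, [/\ A a, B b & le a b].

From mathcomp Require Import all_boot all_fingroup.
From Stdlib Require Import FunctionalExtensionality PropExtensionality.
Set Implicit Arguments. Unset Strict Implicit. Unset Printing Implicit Defensive.

(* Both the component-wise order and the orbits are invariant under G, so a
   single comparison [a <= b] between representatives transports to every
   element of the orbit of [a]: the weak and strong relations agree, and the
   strong relation is clearly a preorder.  For antisymmetry, [a <= b <= s a]
   gives [a <= s a]; since [s] is monotone and [s ^+ #[s] = 1], the chain
   [a <= s a <= s^2 a <= ... <= s^#[s] a = a] forces [s a = a], hence [a = b]. *)

Section PeriodicMonotone.
Variables (U : Type) (le : U -> U -> Prop) (f : U -> U).
Hypothesis le_po : partial_order le.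
Hypothesis f_mono : forall x y, le x y -> le (f x) (f y).

Lemma le_iter_succ (x : U) (m : nat) :
  le x (f x) -> le (iter m f x) (iter m.+1 f x).
Proof. by move=> le_x_fx; elim: m => [|m IHm] //=; apply: f_mono. Qed.

Lemma periodic_le_fixed (k : nat) (x : U) :
  0 < k -> iter k f x = x -> le x (f x) -> f x = x.
Proof.
case: le_po => [le_refl [le_trans le_anti]] k_gt0 per le_x_fx.
have chain m : le (f x) (iter m.+1 f x).
  elim: m => [|m IHm]; first exact: le_refl.
  exact: le_trans _ _ _ IHm (le_iter_succ m.+1 le_x_fx).
apply: le_anti => //; by have := chain k.-1; rewrite prednK // per.
Qed.

End PeriodicMonotone.

Lemma strong_rel_trans (U : Type) (le : U -> U -> Prop) (A B C : U -> Prop) :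
  (forall x y z, le x y -> le y z -> le x z) ->
  strong_rel le A B -> strong_rel le B C -> strong_rel le A C.
Proof.
move=> le_trans AB BC a Aa; have [b Bb le_ab] := AB a Aa.
have [c Cc le_bc] := BC b Bb; exists c => //; exact: le_trans _ _ _ le_ab le_bc.
Qed.

Lemma strong_rel_weak (U : Type) (le : U -> U -> Prop) (A B : U -> Prop) (a : U) :
  A a -> strong_rel le A B -> weak_rel le A B.
Proof. by move=> Aa AB; have [b Bb le_ab] := AB a Aa; exists a, b. Qed.

Section PermAction.
Variables (n : nat) (T : Type).
Implicit Types (a b : 'I_n -> T) (s t : 'S_n).

Lemma pact1 a : pact 1%g a = a.
Proof. by apply: functional_extensionality => i; rewrite /pact perm1. Qed.

Lemma pactM s t a : pact s (pact t a) = pact (s * t)%g a.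
Proof. by apply: functional_extensionality => i; rewrite /pact permM. Qed.

Lemma iter_pact s k a : iter k (pact s) a = pact (s ^+ k)%g a.
Proof. by elim: k => [|k IHk] /=; rewrite ?pact1 // IHk pactM expgS. Qed.

Variable G : {group 'S_n}.

Lemma orbitG_self a : orbitG G a a.
Proof. by exists 1%g; rewrite ?group1 ?pact1. Qed.

Lemma orbitG_pact s b : s \in G -> orbitG G (pact s b) = orbitG G b.
Proof.
move=> sG; apply: functional_extensionality => x.
apply: propositional_extensionality; split=> -[t tG ->].
  by exists (t * s)%g; rewrite ?groupM ?pactM.
exists (t * s^-1)%g; first by rewrite groupM ?groupV.
by rewrite pactM -mulgA mulVg mulg1.
Qed.

End PermAction.

Section ComponentwiseOrder.
Variables (S0 : Type) (le : S0 -> S0 -> Prop) (n : nat).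
Implicit Types (a b c : 'I_n -> S0).

Lemma cw_le_pact (s : 'S_n) a b : cw_le le a b -> cw_le le (pact s a) (pact s b).
Proof. by move=> le_ab i; apply: le_ab. Qed.

Hypothesis le_po : partial_order le.

Lemma cw_le_refl a : cw_le le a a.
Proof. by case: le_po => le_refl _ i; apply: le_refl. Qed.

Lemma cw_le_trans a b c : cw_le le a b -> cw_le le b c -> cw_le le a c.
Proof.
by case: le_po => _ [le_trans _] le_ab le_bc i; apply: le_trans _ _ _ _ (le_bc i).
Qed.

Lemma cw_le_anti a b : cw_le le a b -> cw_le le b a -> a = b.
Proof.
case: le_po => _ [_ le_anti] le_ab le_ba.
by apply: functional_extensionality => i; apply: le_anti.
Qed.

Lemma cw_le_pact_fixed (s : 'S_n) a : cw_le le a (pact s a) -> pact s a = a.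
Proof.
apply: (periodic_le_fixed _ _ (order_gt0 s)); last by rewrite iter_pact expg_order pact1.
  by split; [exact: cw_le_refl | split; [exact: cw_le_trans | exact: cw_le_anti]].
exact: cw_le_pact.
Qed.

Variable G : {group 'S_n}.

Lemma weak_orbit_strong A B :
  is_orbit G A -> is_orbit G B ->
  weak_rel (@cw_le _ le n) A B -> strong_rel (@cw_le _ le n) A B.
Proof.
move=> [a ->] [b ->] [_ [_ [[s sG ->] [t tG ->] le_st]]] _ [r rG ->].
have rsG : (r * s^-1)%g \in G by rewrite groupM ?groupV.
exists (pact (r * s^-1 * t)%g b); first by exists (r * s^-1 * t)%g => //; exact: groupM.
have := cw_le_pact (r * s^-1)%g le_st.
by rewrite !pactM -[X in pact X a]mulgA mulVg mulg1.
Qed.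

Lemma strong_orbit_anti A B :
  is_orbit G A -> is_orbit G B ->
  strong_rel (@cw_le _ le n) A B -> strong_rel (@cw_le _ le n) B A -> A = B.
Proof.
move=> [a ->] [b0 ->] AB BA.
have [b [t tG ->] le_ab] := AB a (orbitG_self G a).
have [_ [s sG ->] le_ba] := BA (pact t b0) (ex_intro2 _ _ t tG erefl).
have le_a_sa : cw_le le a (pact s a) := cw_le_trans le_ab le_ba.
rewrite (cw_le_pact_fixed le_a_sa) in le_ba.
by rewrite (cw_le_anti le_ab le_ba) orbitG_pact.
Qed.

End ComponentwiseOrder.

Theorem corollary3 (S0 : Type) (le : S0 -> S0 -> Prop)
  (Hpo : partial_order le) (Hne : inhabited S0)
  (n : nat) (Hn : 0 < n) (G : {group 'S_n}) :
  (forall A B : ('I_n -> S0) -> Prop, is_orbit G A -> is_orbit G B ->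
     (strong_rel (@cw_le S0 le n) A B <-> weak_rel (@cw_le S0 le n) A B)) /\
  (forall A, is_orbit G A -> weak_rel (@cw_le S0 le n) A A) /\
  (forall A B C, is_orbit G A -> is_orbit G B -> is_orbit G C ->
     weak_rel (@cw_le S0 le n) A B -> weak_rel (@cw_le S0 le n) B C ->
     weak_rel (@cw_le S0 le n) A C) /\
  (forall A B, is_orbit G A -> is_orbit G B ->
     weak_rel (@cw_le S0 le n) A B -> weak_rel (@cw_le S0 le n) B A -> A = B).
Proof.
have strong_weak A B : is_orbit G A -> is_orbit G B ->
    strong_rel (@cw_le _ le n) A B <-> weak_rel (@cw_le _ le n) A B.
  move=> oA oB; split; last exact: weak_orbit_strong oA oB.
  by case: (oA) => a ->; apply: strong_rel_weak (orbitG_self G a).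
split; first exact: strong_weak.
split.
  move=> _ [a ->]; exists a, a.
  by split; [exact: orbitG_self | exact: orbitG_self | exact: cw_le_refl].
split=> [A B C oA oB oC /(strong_weak _ _ oA oB) AB /(strong_weak _ _ oB oC) BC|].
  by apply/(strong_weak _ _ oA oC); apply: strong_rel_trans AB BC; apply: cw_le_trans.
move=> A B oA oB /(strong_weak _ _ oA oB) AB /(strong_weak _ _ oB oA) BA.
exact: (strong_orbit_anti Hpo oA oB AB BA).
Qed.
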